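(* Let $S$ be a semigroup, let $T$ be a subsemigroup of $S$ generated by a finite set $A$, and let $s\in S$. If $\langle T,s\rangle\setminus T$ is finite, then the poset of ends $\Omega\Gamma_r(T,A)$ is isomorphic, as a partially ordered set, to $\Omega\Gamma_r(\langle T,s\rangle, A\cup\{s\})$.
   Context: $\langle T,s\rangle$ is the subsemigroup of $S$ generated by $T\cup\{s\}$. A digraph on a set $\Omega$ is a subset $\Gamma\subseteq\Omega\times\Omega$. A path is a finite or infinite sequence of pairwise distinct vertices $(v_0,v_1,\ldots)$ with $(v_i,v_{i+1})\in\Gamma$ for all $i$ (a single vertex is a path of length 0); a ray is an infinite path; an anti-ray is an infinite sequence of pairwise distinct vertices with $(v_{i+1},v_i)\in\Gamma$ for all $i$. For infinite $\Sigma',\Sigma\subseteq\Omega$, write $\Sigma'\preccurlyeq\Sigma$ if there are infinitely many pairwise vertex-disjoint paths each with initial vertex in $\Sigma'$ and final vertex in $\Sigma$. Restricted to the set of rays and anti-rays of $\Gamma$ (identified with their vertex sets), $\preccurlyeq$ is a preorder; let $\approx$ be the associated equivalence ($\mathbf{r}\approx\mathbf{r}'$ iff $\mathbf{r}\preccurlyeq\mathbf{r}'$ and $\mathbf{r}'\preccurlyeq\mathbf{r}$). The ends of $\Gamma$ are the $\approx$-classes of rays and anti-rays, and $\Omega\Gamma$ is the set of ends with the partial order induced by $\preccurlyeq$. For a semigroup $S$ generated by $A$, the right Cayley graph $\Gamma_r(S,A)$ is the digraph on $S$ with edges $(x,xa)$ for all $x\in S$, $a\in A$. *)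

From Stdlib Require Import List Classical.
Import ListNotations.
Set Implicit Arguments.

Inductive gen (S : Type) (op : S -> S -> S) (X : S -> Prop) : S -> Prop :=
| gen_base : forall x, X x -> gen op X x
| gen_op : forall x y, gen op X x -> gen op X y -> gen op X (op x y).

Definition finite_set (S : Type) (P : S -> Prop) : Prop :=
  exists l : list S, forall x, P x -> In x l.

Record digraph (S : Type) := Digraph { vert : S -> Prop; edge : S -> S -> Prop }.

Definition cayley_r (S : Type) (op : S -> S -> S) (T A : S -> Prop) : digraph S :=
  Digraph T (fun x y => T x /\ exists a, A a /\ y = op x a).

Fixpoint chain (S : Type) (E : S -> S -> Prop) (p : list S) : Prop :=
  match p with
  | x :: ((y :: _) as q) => E x y /\ chain E q
  | _ => True
  end.

Definition is_path (S : Type) (G : digraph S) (p : list S) : Prop :=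
  p <> [] /\ NoDup p /\ Forall (vert G) p /\ chain (edge G) p.

Definition is_ray (S : Type) (G : digraph S) (r : nat -> S) : Prop :=
  (forall i, vert G (r i)) /\ (forall i j, r i = r j -> i = j) /\
  (forall i, edge G (r i) (r (Datatypes.S i))).

Definition is_antiray (S : Type) (G : digraph S) (r : nat -> S) : Prop :=
  (forall i, vert G (r i)) /\ (forall i j, r i = r j -> i = j) /\
  (forall i, edge G (r (Datatypes.S i)) (r i)).

Definition ray_or_antiray (S : Type) (G : digraph S) (r : nat -> S) : Prop :=
  is_ray G r \/ is_antiray G r.

Definition vset (S : Type) (r : nat -> S) : S -> Prop := fun x => exists i, r i = x.

Definition reach_le (S : Type) (G : digraph S) (X Y : S -> Prop) : Prop :=
  exists P : nat -> list S,
    (forall i, is_path G (P i) /\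
       (exists x, hd_error (P i) = Some x /\ X x) /\
       (exists y, hd_error (rev (P i)) = Some y /\ Y y)) /\
    (forall i j, i <> j -> forall v, In v (P i) -> ~ In v (P j)).

Definition end_equiv (S : Type) (G : digraph S) (r r' : nat -> S) : Prop :=
  reach_le G (vset r) (vset r') /\ reach_le G (vset r') (vset r).

Definition Ends (S : Type) (G : digraph S) : Type :=
  { C : (nat -> S) -> Prop |
    exists r, ray_or_antiray G r /\
      forall r', C r' <-> (ray_or_antiray G r' /\ end_equiv G r r') }.

Definition end_le (S : Type) (G : digraph S) (C D : Ends G) : Prop :=
  exists r r', proj1_sig C r /\ proj1_sig D r' /\ reach_le G (vset r) (vset r').

Definition ends_iso (S1 S2 : Type) (G1 : digraph S1) (G2 : digraph S2) : Prop :=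
  exists f : Ends G1 -> Ends G2,
    (forall C D, f C = f D -> C = D) /\
    (forall D, exists C, f C = D) /\
    (forall C D, @end_le S1 G1 C D <-> @end_le S2 G2 (f C) (f D)).

From Stdlib Require Import List Arith Lia Classical ClassicalEpsilon FunctionalExtensionality PropExtensionality ProofIrrelevance.
Import ListNotations.

(* [GT] = Gamma_r(T, A) is a subgraph of [GTs] = Gamma_r(<T,s>, A u {s}), and the isomorphism
   sends the end of a ray of [GT] to its end in [GTs].

   Every edge of [GTs] outside [GT] is labelled [s]. Either [y s] is reached from [y] by one of
   finitely many fixed short words over [A], or [y s = y f] with [f] in the finite set
   [F = <T,s> \ T]; and an offset [t = y f] with [y = y' g] is [t = y' (g f)], where [g f] is
   again either in [T] (a short word from [y']) or in [F]. Tracing offsets backwards along a walk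
   and then along a ray [r] of [GT] therefore always ends at a shadow of [t] (a vertex from which
   a short word leads to [t]), except at finitely many stuck vertices. So a path of [GTs] starting
   on [r] and avoiding [F] and the stuck vertices is shadowed by a walk of [GT] from [r] that stays
   within short words of it; infinitely many disjoint paths give walks of bounded multiplicity,
   hence disjoint paths of [GT]. Thus [GTs] creates no new reachability between rays of [GT].

   Conversely a ray or anti-ray [q] of [GTs] eventually lies in [T]. By the same tracing, its
   vertices together with the short words linking each [s]-step to a shadow form a locally finite
   set, connected in [GT] from finitely many roots, and Koenig's lemma yields a ray or anti-ray of
   [GT] inside it, which is equivalent to [q]. *)

Section Lists.
Context {V : Type}.
Implicit Types (l p e pre post : list V) (x y w d : V).

Lemma last_cons_cons l x y d : last (x :: y :: l) d = last (y :: l) d.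
Proof. reflexivity. Qed.

Lemma last_default_irrel l x d d' : last (x :: l) d = last (x :: l) d'.
Proof.
  revert x; induction l as [|a l IH]; intros x; [reflexivity|].
  rewrite !last_cons_cons; apply IH.
Qed.

Lemma last_in_cons l x d : In (last (x :: l) d) (x :: l).
Proof.
  revert x; induction l as [|a l IH]; intros x; [now left|].
  rewrite last_cons_cons; right; apply IH.
Qed.

Lemma last_app_cons pre x post d : last (pre ++ x :: post) d = last (x :: post) x.
Proof.
  induction pre as [|a [|b pre] IH]; cbn [app] in *; [apply last_default_irrel| |];
    rewrite last_cons_cons; [apply last_default_irrel|exact IH].
Qed.

Lemma hd_error_rev_cons l x : hd_error (rev (x :: l)) = Some (last (x :: l) x).
Proof.
  revert x; induction l as [|a l IH] using rev_ind; intros x; [reflexivity|].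
  rewrite app_comm_cons, rev_app_distr, last_last; reflexivity.
Qed.

Lemma chain_app_r {E : V -> V -> Prop} {pre l} : chain E (pre ++ l) -> chain E l.
Proof.
  induction pre as [|a pre IH]; simpl; auto.
  intros H; apply IH; destruct (pre ++ l); simpl in *; tauto.
Qed.

Lemma chain_app_l {E : V -> V -> Prop} {p e} : chain E (p ++ e) -> chain E p.
Proof.
  induction p as [|a [|b p] IH]; simpl; auto.
  intros [H1 H2]; split; [exact H1|exact (IH H2)].
Qed.

Lemma chain_impl {E E' : V -> V -> Prop} {l} :
  (forall x y, E x y -> E' x y) -> chain E l -> chain E' l.
Proof.
  intros HE; induction l as [|a [|b l] IH]; simpl; auto.
  intros [H1 H2]; split; [exact (HE _ _ H1)|exact (IH H2)].
Qed.

Lemma chain_app_last {E : V -> V -> Prop} {p w e} d :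
  p <> [] -> chain E (p ++ w :: e) -> E (last p d) w.
Proof.
  induction p as [|a [|b p] IH]; intros Hp Hc; [congruence| |].
  - simpl in *; tauto.
  - rewrite last_cons_cons; apply IH; [discriminate|]; simpl in *; tauto.
Qed.

Definition suffixes (L : list V) : list (list V) :=
  map (fun k => skipn k L) (seq 0 (S (length L))).

Lemma suffixes_in L1 L2 : In L2 (suffixes (L1 ++ L2)).
Proof.
  apply in_map_iff; exists (length L1); split.
  - rewrite skipn_app, skipn_all, Nat.sub_diag; reflexivity.
  - apply in_seq; rewrite length_app; lia.
Qed.

Definition card_le (P : V -> Prop) (c : nat) :=
  forall l, NoDup l -> (forall x, In x l -> P x) -> length l <= c.

Lemma card_le_of_incl {P : V -> Prop} {l} : (forall x, P x -> In x l) -> card_le P (length l).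
Proof. intros HP l' Hl' H; apply NoDup_incl_length; auto; intros x Hx; auto. Qed.

Lemma card_le_union {P Q : V -> Prop} {a b} :
  card_le P a -> card_le Q b -> card_le (fun x => P x \/ Q x) (a + b).
Proof.
  intros HP HQ l Hl Hx.
  set (inP := fun x => if excluded_middle_informative (P x) then true else false).
  assert (inP_spec : forall x, inP x = true <-> P x).
  { intros x; unfold inP; destruct (excluded_middle_informative (P x)); split; auto; discriminate. }
  rewrite <- (filter_length inP l).
  enough (length (filter inP l) <= a /\ length (filter (fun x => negb (inP x)) l) <= b) by lia.
  split; [apply HP | apply HQ]; try (apply NoDup_filter; auto);
    intros x Hin; apply filter_In in Hin as [Hin Hf].
  - now apply inP_spec.
  - destruct (Hx x Hin) as [H|H]; auto.
    apply inP_spec in H; rewrite H in Hf; discriminate.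
Qed.

End Lists.

Definition walk {V : Type} (G : digraph V) (x : V) (l : list V) (y : V) :=
  chain (edge G) (x :: l) /\ Forall (vert G) (x :: l) /\ last (x :: l) x = y.

Section Walks.
Context {V : Type} {G : digraph V}.

Lemma walk_nil {x} : vert G x -> walk G x [] x.
Proof. intros H; repeat split; auto. Qed.

Lemma walk_cons {x y l z} : edge G x y -> vert G x -> walk G y l z -> walk G x (y :: l) z.
Proof.
  intros He Hv (Hc & Hf & Hl); repeat split; auto.
  rewrite last_cons_cons, <- Hl; apply last_default_irrel.
Qed.

Lemma walk_cons_inv {x y l z} : walk G x (y :: l) z -> edge G x y /\ vert G x /\ walk G y l z.
Proof.
  intros ([He Hc] & Hf & Hl); inversion Hf; subst; repeat split; auto.
  rewrite last_cons_cons; apply last_default_irrel.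
Qed.

Lemma walk_last {x l y} d : walk G x l y -> last (x :: l) d = y.
Proof. intros (_ & _ & H); rewrite <- H; apply last_default_irrel. Qed.

Lemma walk_end_in {x l y} : walk G x l y -> In y (x :: l).
Proof. intros H; rewrite <- (walk_last y H); apply last_in_cons. Qed.

Lemma walk_vert {x l y v} : walk G x l y -> In v (x :: l) -> vert G v.
Proof. intros (_ & Hf & _) Hi; rewrite Forall_forall in Hf; auto. Qed.

Lemma walk_end_vert {x l y} : walk G x l y -> vert G y.
Proof. intros H; exact (walk_vert H (walk_end_in H)). Qed.

Lemma walk_app {x l y l' z} : walk G x l y -> walk G y l' z -> walk G x (l ++ l') z.
Proof.
  revert x; induction l as [|a l IH]; intros x H1 H2.
  - destruct H1 as (_ & _ & Hl); simpl in Hl; subst; exact H2.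
  - apply walk_cons_inv in H1 as (He & Hv & Hw); apply walk_cons; eauto.
Qed.

Lemma walk_snoc {x l y z} : walk G x l y -> edge G y z -> vert G z -> walk G x (l ++ [z]) z.
Proof.
  intros Hw He Hz; apply (walk_app Hw), walk_cons, walk_nil; auto.
  exact (walk_end_vert Hw).
Qed.

Lemma walk_snoc_inv {x l z y} :
  walk G x (l ++ [z]) y -> z = y /\ exists z', walk G x l z' /\ edge G z' z.
Proof.
  revert x; induction l as [|a l IH]; intros x H; simpl in H;
    apply walk_cons_inv in H as (He & Hv & Hw).
  - destruct Hw as (_ & _ & Hl); split; [exact Hl|].
    exists x; split; auto; apply walk_nil; auto.
  - destruct (IH _ Hw) as (E & z' & Hw' & He'); split; auto.
    exists z'; split; auto; apply walk_cons; auto.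
Qed.

Lemma walk_to_path {x l y} : walk G x l y ->
  exists l', is_path G (x :: l') /\ last (x :: l') x = y /\ incl (x :: l') (x :: l).
Proof.
  revert x; induction l as [|a l IH]; intros x H.
  - exists []; destruct H as (Hc & Hf & Hl); repeat split; auto.
    + discriminate.
    + repeat constructor; simpl; auto.
    + apply incl_refl.
  - apply walk_cons_inv in H as (He & Hv & Hw).
    destruct (IH a Hw) as (l1 & (_ & Hnd & Hf & Hc) & Hl & Hi).
    destruct (classic (In x (a :: l1))) as [Hin|Hnin].
    + apply in_split in Hin as (pre & post & Heq); rewrite Heq in *.
      exists post; repeat split.
      * discriminate.
      * exact (NoDup_app_remove_l _ _ Hnd).
      * apply Forall_app in Hf; tauto.
      * exact (chain_app_r Hc).
      * rewrite <- Hl; symmetry; apply last_app_cons.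
      * intros v Hv'; right; apply Hi, in_or_app; now right.
    + exists (a :: l1); split; [|split].
      * split; [discriminate|split; [constructor; auto|split; [constructor; auto|split; auto]]].
      * rewrite last_cons_cons, <- Hl; apply last_default_irrel.
      * intros v [<-|Hv']; [now left|right; auto].
Qed.

Lemma walk_restrict {N : V -> Prop} {x l y} : walk G x l y -> (forall v, In v (x :: l) -> N v) ->
  walk (Digraph N (edge G)) x l y.
Proof. intros (Hc & _ & Hl) HN; repeat split; auto; rewrite Forall_forall; exact HN. Qed.

Lemma path_walk {p x z} : is_path G p -> hd_error p = Some x -> hd_error (rev p) = Some z ->
  exists l, p = x :: l /\ walk G x l z.
Proof.
  intros (_ & _ & Hf & Hc) Hx Hz; destruct p as [|a l]; [discriminate|].
  injection Hx as <-; exists l; repeat split; auto.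
  rewrite hd_error_rev_cons in Hz; congruence.
Qed.

End Walks.

Section Subgraph.
Context {V : Type} {G G' : digraph V}.
Hypothesis vert_sub : forall x, vert G x -> vert G' x.
Hypothesis edge_sub : forall x y, edge G x y -> edge G' x y.

Lemma walk_sub {x l y} : walk G x l y -> walk G' x l y.
Proof.
  intros (Hc & Hf & Hl); repeat split; auto.
  - exact (chain_impl edge_sub Hc).
  - exact (Forall_impl _ vert_sub Hf).
Qed.

Lemma path_sub {p} : is_path G p -> is_path G' p.
Proof.
  intros (H1 & H2 & H3 & H4); repeat split; auto.
  - exact (Forall_impl _ vert_sub H3).
  - exact (chain_impl edge_sub H4).
Qed.

Lemma reach_le_sub {X Y} : reach_le G X Y -> reach_le G' X Y.
Proof.
  intros (P & H1 & H2); exists P; split; auto.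
  intros i; destruct (H1 i) as [Hp H]; split; auto; apply path_sub; auto.
Qed.

Lemma is_ray_sub {r} : is_ray G r -> is_ray G' r.
Proof. intros (Ha & Hb & Hc); repeat split; auto. Qed.

Lemma is_antiray_sub {r} : is_antiray G r -> is_antiray G' r.
Proof. intros (Ha & Hb & Hc); repeat split; auto. Qed.

Lemma ray_or_antiray_sub {r} : ray_or_antiray G r -> ray_or_antiray G' r.
Proof. intros [H|H]; [left; exact (is_ray_sub H)|right; exact (is_antiray_sub H)]. Qed.

Lemma end_equiv_sub {r r'} : end_equiv G r r' -> end_equiv G' r r'.
Proof. intros [H1 H2]; split; apply reach_le_sub; auto. Qed.

End Subgraph.

Definition injective {V : Type} (r : nat -> V) := forall i j, r i = r j -> i = j.

Definition disjoint_family {V : Type} (P : nat -> list V) :=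
  forall i j, i <> j -> forall v, In v (P i) -> ~ In v (P j).

Definition bounded_index {V : Type} (M : V -> nat -> Prop) :=
  forall v, exists B, forall n, M v n -> n < B.

Section Indices.
Context {V : Type}.

Lemma disjoint_bounded_index {P : nat -> list V} :
  disjoint_family P -> bounded_index (fun v i => In v (P i)).
Proof.
  intros HP v; destruct (classic (exists i, In v (P i))) as [[i Hi]|Hn].
  - exists (S i); intros j Hj; destruct (Nat.eq_dec i j); [lia|].
    exfalso; exact (HP i j n v Hi Hj).
  - exists 0; intros j Hj; exfalso; eauto.
Qed.

Lemma injective_disjoint {r : nat -> V} : injective r -> disjoint_family (fun i => [r i]).
Proof. intros Hr i j Hij w [<-|[]] [Hw|[]]; exact (Hij (Hr _ _ (eq_sym Hw))). Qed.

Lemma injective_bounded_index {r : nat -> V} :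
  injective r -> bounded_index (fun v i => r i = v).
Proof.
  intros Hr v; destruct (disjoint_bounded_index (injective_disjoint Hr) v) as [B HB].
  exists B; intros n Hn; apply HB; now left.
Qed.

Lemma bounded_index_list {M : V -> nat -> Prop} :
  bounded_index M -> forall L, exists B, forall n v, In v L -> M v n -> n < B.
Proof.
  intros HM L; induction L as [|a L [B1 H1]]; [exists 0; intros n v []|].
  destruct (HM a) as [B2 H2]; exists (B1 + B2).
  intros n v [<-|Hv] Hn; [apply H2 in Hn|apply (H1 n v Hv) in Hn]; lia.
Qed.

Lemma injective_list_bound {r : nat -> V} :
  injective r -> forall L, exists B, forall i, In (r i) L -> i < B.
Proof.
  intros Hr L; destruct (bounded_index_list (injective_bounded_index Hr) L) as [B HB].
  exists B; intros i Hi; exact (HB i _ Hi eq_refl).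
Qed.

Lemma eventually_forall_list (Q : V -> nat -> Prop) (l : list V) :
  (forall x, In x l -> exists M0, forall M, M0 <= M -> Q x M) -> exists M, forall x, In x l -> Q x M.
Proof.
  intros H; enough (K : exists M0, forall M, M0 <= M -> forall x, In x l -> Q x M)
    by (destruct K as [M0 K]; exists M0; apply K; lia).
  induction l as [|a l IH]; [exists 0; intros M _ x []|].
  destruct IH as [M1 H1]; [intros x Hx; apply H; now right|].
  destruct (H a (or_introl eq_refl)) as [M2 H2]; exists (M1 + M2).
  intros M HM x [<-|Hx]; [apply H2|apply H1]; auto; lia.
Qed.

Lemma disjoint_family_avoid {P : nat -> list V} {Bad : V -> Prop} {c} :
  disjoint_family P -> card_le Bad c -> exists B, forall i, B <= i -> forall v, In v (P i) -> ~ Bad v.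
Proof.
  intros HP Hc; apply NNPP; intros Hn.
  assert (K : forall k, exists l B, NoDup l /\ length l = k /\ (forall x, In x l -> Bad x) /\
                (forall x, In x l -> exists i, i < B /\ In x (P i))).
  { induction k as [|k (l & B & H1 & H2 & H3 & H4)]; [exists [], 0; split; [constructor|repeat split; intros x []]|].
    assert (Hb : exists i v, B <= i /\ In v (P i) /\ Bad v).
    { apply NNPP; intros Hb; apply Hn; exists B; intros i Hi v Hv Hbd; apply Hb; exists i, v; auto. }
    destruct Hb as (i & v & Hi & Hv & Hbd); exists (v :: l), (S i); repeat split.
    - constructor; auto; intros Hin; destruct (H4 v Hin) as (j & Hj & Hvj).
      refine (HP j i _ v Hvj Hv); lia.
    - simpl; lia.
    - intros x [<-|Hx]; auto.
    - intros x [<-|Hx]; [exists i; split; auto|destruct (H4 x Hx) as (j & Hj & Hj'); exists j; split; auto; lia]. }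
  destruct (K (S c)) as (l & B & H1 & H2 & H3 & _); specialize (Hc l H1 H3); lia.
Qed.

Lemma injective_meet_far {e y : nat -> V} :
  injective e -> injective y -> (forall i, exists k, e i = y k) ->
  forall n B, exists i k, n <= i /\ B <= k /\ e i = y k.
Proof.
  intros He Hy Hey n B; apply NNPP; intros Hn.
  assert (Hinc : incl (map e (seq n (S B))) (map y (seq 0 B))).
  { intros v Hv; apply in_map_iff in Hv as (i & <- & Hs); apply in_seq in Hs.
    destruct (Hey i) as [k Hk]; apply in_map_iff; exists k; split; [congruence|].
    apply in_seq; split; [lia|]; destruct (Nat.lt_ge_cases k B) as [H|H]; [lia|].
    exfalso; apply Hn; exists i, k; repeat split; auto; lia. }
  apply NoDup_incl_length in Hinc.
  - rewrite !length_map, !length_seq in Hinc; lia.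
  - apply NoDup_map_NoDup_ForallPairs; [intros a c _ _; apply He|apply seq_NoDup].
Qed.

End Indices.

Section DisjointSubsequence.
Context {V : Type} (W : nat -> list V) (b : V -> nat).
Hypothesis b_bound : forall v n, In v (W n) -> n < b v.

Fixpoint weight (U : list V) : nat := match U with [] => 0 | v :: U' => b v + weight U' end.

Lemma weight_ge U v : In v U -> b v <= weight U.
Proof. induction U as [|a U IH]; simpl; intros H; [tauto|]; destruct H as [<-|H]; [|specialize (IH H)]; lia. Qed.

(* Each new index exceeds [b v] for every vertex [v] of the lists chosen so far, so the new
   list avoids them. *)
Fixpoint sparse (n : nat) : nat * list V :=
  match n with
  | 0 => (0, W 0)
  | S n' => let j := S (fst (sparse n') + weight (snd (sparse n'))) in (j, snd (sparse n') ++ W j)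
  end.

Lemma sparse_incl n m : m <= n -> incl (W (fst (sparse m))) (snd (sparse n)).
Proof.
  induction 1 as [|n Hmn IH].
  - destruct m; simpl; [apply incl_refl|apply incl_appr, incl_refl].
  - simpl; apply incl_appl, IH.
Qed.

Lemma disjoint_subsequence : exists sg : nat -> nat, disjoint_family (fun n => W (sg n)).
Proof.
  exists (fun n => fst (sparse n)).
  assert (K : forall i j, i < j -> forall v, In v (W (fst (sparse i))) -> ~ In v (W (fst (sparse j)))).
  { intros i [|j] Hij v H1 H2; [lia|].
    assert (H3 : In v (snd (sparse j))) by (apply (@sparse_incl j i); [lia|auto]).
    apply weight_ge in H3; apply b_bound in H2; simpl in H2; lia. }
  intros i j Hij v H1 H2; destruct (Nat.lt_ge_cases i j).
  - exact (K i j H v H1 H2).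
  - refine (K j i _ v H2 H1); lia.
Qed.

End DisjointSubsequence.

Section Reachability.
Context {V : Type} {G : digraph V}.

(* Shorten the walks to paths and pass to a disjoint subsequence. *)
Lemma reach_le_of_walks {X Y : V -> Prop} (M : V -> nat -> Prop) :
  bounded_index M ->
  (forall n, exists x l z, walk G x l z /\ X x /\ Y z /\ forall v, In v (x :: l) -> M v n) ->
  reach_le G X Y.
Proof.
  intros HM Hw.
  assert (Hp : forall n, exists p, (is_path G p /\ (exists x, hd_error p = Some x /\ X x) /\
                 (exists z, hd_error (rev p) = Some z /\ Y z)) /\ forall v, In v p -> M v n).
  { intros n; destruct (Hw n) as (x & l & z & W & Xx & Yz & Hl).
    destruct (walk_to_path W) as (l' & Hp & Hlast & Hi).
    exists (x :: l'); split; [split; [exact Hp|split]|].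
    - exists x; auto.
    - exists z; rewrite hd_error_rev_cons; split; congruence.
    - intros v Hv; apply Hl, Hi, Hv. }
  apply choice in Hp as [P HP]; apply choice in HM as [b Hb].
  destruct (disjoint_subsequence P b) as [sg Hsg]; [intros v n Hv; apply Hb, HP, Hv|].
  exists (fun n => P (sg n)); split; [intros i; apply HP|exact Hsg].
Qed.

Lemma reach_le_walks {X Y : V -> Prop} : reach_le G X Y ->
  exists (x z : nat -> V) (l : nat -> list V),
    (forall n, walk G (x n) (l n) (z n) /\ X (x n) /\ Y (z n)) /\
    disjoint_family (fun n => x n :: l n).
Proof.
  intros (P & HP & Hd).
  assert (H : forall n, exists xz : V * V, P n = fst xz :: tl (P n) /\
                walk G (fst xz) (tl (P n)) (snd xz) /\ X (fst xz) /\ Y (snd xz)).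
  { intros n; destruct (HP n) as (Hp & (x & Hx & Xx) & (z & Hz & Yz)).
    destruct (path_walk Hp Hx Hz) as (l & Hl & Hw).
    exists (x, z); rewrite Hl; auto. }
  apply choice in H as [f Hf].
  exists (fun n => fst (f n)), (fun n => snd (f n)), (fun n => tl (P n)); split.
  - intros n; apply Hf.
  - intros i j Hij v; rewrite <- !(proj1 (Hf _)); exact (Hd i j Hij v).
Qed.

Lemma reach_le_of_injective {X Y : V -> Prop} {r : nat -> V} :
  injective r -> (forall n, vert G (r n) /\ X (r n) /\ Y (r n)) -> reach_le G X Y.
Proof.
  intros Hi Hr; apply (reach_le_of_walks (fun v n => r n = v) (injective_bounded_index Hi)).
  intros n; exists (r n), [], (r n); repeat split; try apply Hr.
  - repeat constructor; apply Hr.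
  - intros v [<-|[]]; reflexivity.
Qed.

Lemma ray_or_antiray_injective {y : nat -> V} : ray_or_antiray G y -> injective y.
Proof. intros [(_ & H & _)|(_ & H & _)]; exact H. Qed.

Lemma ray_or_antiray_vert {y : nat -> V} : ray_or_antiray G y -> forall i, vert G (y i).
Proof. intros [(H & _)|(H & _)]; exact H. Qed.

Lemma ray_segment {y : nat -> V} : is_ray G y -> forall k d,
  exists m, walk G (y k) m (y (k + d)) /\ forall v, In v m -> exists t, k <= t /\ y t = v.
Proof.
  intros (Hv & _ & He) k d; induction d as [|d (m & Hw & Hm)].
  - exists []; rewrite Nat.add_0_r; split; [apply walk_nil, Hv|intros v []].
  - exists (m ++ [y (k + S d)]); split.
    + apply (walk_snoc Hw); auto; rewrite Nat.add_succ_r; apply He.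
    + intros v Hin; apply in_app_or in Hin as [Hin|[<-|[]]]; [apply Hm, Hin|].
      exists (k + S d); split; auto; lia.
Qed.

Lemma antiray_segment {y : nat -> V} : is_antiray G y -> forall k d,
  exists m, walk G (y (k + d)) m (y k) /\ forall v, In v m -> exists t, k <= t /\ y t = v.
Proof.
  intros (Hv & _ & He) k d; induction d as [|d (m & Hw & Hm)].
  - exists []; rewrite Nat.add_0_r; split; [apply walk_nil, Hv|intros v []].
  - exists (y (k + d) :: m); split.
    + apply walk_cons; auto; rewrite Nat.add_succ_r; apply He.
    + intros v [<-|Hin]; [exists (k + d); split; auto; lia|apply Hm, Hin].
Qed.

Section ThroughRay.
Context {y : nat -> V} (y_roa : ray_or_antiray G y).

Lemma join_along_far {e b : nat -> V} : injective e -> injective b ->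
  (forall i, vset y (e i)) -> (forall j, vset y (b j)) ->
  forall n, exists i j m, n <= i /\ n <= j /\ walk G (e i) m (b j) /\
    forall v, In v m -> exists t, n <= t /\ y t = v.
Proof.
  intros He Hb Hey Hby n.
  assert (Hey' : forall i, exists k, e i = y k) by (intros i; destruct (Hey i) as [k Hk]; eauto).
  assert (Hby' : forall j, exists k, b j = y k) by (intros j; destruct (Hby j) as [k Hk]; eauto).
  pose proof (ray_or_antiray_injective y_roa) as Hy.
  destruct y_roa as [Hr|Ha].
  - destruct (injective_meet_far He Hy Hey' n n) as (i & k & Hi & Hk & Ei).
    destruct (injective_meet_far Hb Hy Hby' n k) as (j & k' & Hj & Hk' & Ej).
    destruct (ray_segment Hr k (k' - k)) as (m & Hw & Hm).
    replace (k + (k' - k)) with k' in Hw by lia.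
    exists i, j, m; rewrite Ei, Ej; split; [|split; [|split]]; auto.
    intros v Hv; destruct (Hm v Hv) as (t & Ht & <-); exists t; split; auto; lia.
  - destruct (injective_meet_far Hb Hy Hby' n n) as (j & k' & Hj & Hk' & Ej).
    destruct (injective_meet_far He Hy Hey' n k') as (i & k & Hi & Hk & Ei).
    destruct (antiray_segment Ha k' (k - k')) as (m & Hw & Hm).
    replace (k' + (k - k')) with k in Hw by lia.
    exists i, j, m; rewrite Ei, Ej; split; [|split; [|split]]; auto.
    intros v Hv; destruct (Hm v Hv) as (t & Ht & <-); exists t; split; auto; lia.
Qed.

Lemma reach_le_trans {X Z : V -> Prop} :
  reach_le G X (vset y) -> reach_le G (vset y) Z -> reach_le G X Z.
Proof.
  intros HXY HYZ.
  destruct (reach_le_walks HXY) as (x & e & l & HP & HPd).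
  destruct (reach_le_walks HYZ) as (b & z & l' & HQ & HQd).
  assert (He : injective e).
  { intros i j Hij; destruct (Nat.eq_dec i j) as [|n]; auto; exfalso.
    apply (HPd i j n (e i)); [|rewrite Hij]; eapply walk_end_in, HP. }
  assert (Hb : injective b).
  { intros i j Hij; destruct (Nat.eq_dec i j) as [|n]; auto; exfalso.
    apply (HQd i j n (b i)); [|rewrite Hij]; now left. }
  apply (reach_le_of_walks (fun v n =>
    (exists i, n <= i /\ In v (x i :: l i)) \/ (exists t, n <= t /\ y t = v) \/
    (exists j, n <= j /\ In v (b j :: l' j)))).
  - intros v.
    destruct (disjoint_bounded_index HPd v) as [B1 H1].
    destruct (disjoint_bounded_index HQd v) as [B2 H2].
    destruct (injective_bounded_index (ray_or_antiray_injective y_roa) v) as [B3 H3].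
    exists (B1 + B2 + B3); intros n [(i & Hi & Hv)|[(t & Ht & Hv)|(j & Hj & Hv)]];
      [apply H1 in Hv|apply H3 in Hv|apply H2 in Hv]; lia.
  - intros n.
    destruct (join_along_far He Hb (fun i => proj2 (proj2 (HP i))) (fun j => proj1 (proj2 (HQ j))) n)
      as (i & j & m & Hi & Hj & Hw & Hm).
    exists (x i), (l i ++ m ++ l' j), (z j); split; [|split; [apply HP|split; [apply HQ|]]].
    + exact (walk_app (proj1 (HP i)) (walk_app Hw (proj1 (HQ j)))).
    + intros v Hv; rewrite app_comm_cons in Hv.
      apply in_app_or in Hv as [Hv|Hv]; [left; exists i; auto|].
      apply in_app_or in Hv as [Hv|Hv].
      * right; left; destruct (Hm v Hv) as (t & Ht & <-); exists t; auto.
      * right; right; exists j; split; auto; now right.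
Qed.

End ThroughRay.

End Reachability.

Section Ends.
Context {V : Type} {G : digraph V}.

Lemma end_equiv_refl {r} : ray_or_antiray G r -> end_equiv G r r.
Proof.
  intros Hr; enough (H : reach_le G (vset r) (vset r)) by (split; exact H).
  apply (reach_le_of_injective (ray_or_antiray_injective Hr)).
  intros n; split; [apply (ray_or_antiray_vert Hr)|split; exists n; reflexivity].
Qed.

Lemma end_equiv_sym {r r'} : end_equiv G r r' -> end_equiv G r' r.
Proof. intros [H1 H2]; split; assumption. Qed.

Lemma end_equiv_trans {r1 r2 r3} :
  ray_or_antiray G r2 -> end_equiv G r1 r2 -> end_equiv G r2 r3 -> end_equiv G r1 r3.
Proof. intros H2 [A1 B1] [A2 B2]; split; eapply reach_le_trans; eauto. Qed.

Lemma reach_le_end_equiv {r1 r1' r2 r2'} : ray_or_antiray G r1 -> ray_or_antiray G r2 ->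
  end_equiv G r1 r1' -> end_equiv G r2 r2' ->
  reach_le G (vset r1) (vset r2) -> reach_le G (vset r1') (vset r2').
Proof.
  intros H1 H2 [_ E1] [E2 _] H.
  exact (reach_le_trans H2 (reach_le_trans H1 E1 H) E2).
Qed.

Lemma ray_or_antiray_shift {q} (K : nat) : ray_or_antiray G q ->
  ray_or_antiray G (fun k => q (k + K)) /\ end_equiv G (fun k => q (k + K)) q.
Proof.
  intros Hq; pose (q' := fun k => q (k + K)).
  assert (Hq' : ray_or_antiray G q').
  { destruct Hq as [(H1 & H2 & H3)|(H1 & H2 & H3)]; [left|right]; unfold q';
      (split; [intros i; apply H1|split; [intros i j H; apply H2 in H; lia|intros i; apply H3]]). }
  split; [exact Hq'|].
  split; apply (reach_le_of_injective (ray_or_antiray_injective Hq')); intros n;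
    (split; [apply (ray_or_antiray_vert Hq')|]); split;
    solve [exists n; reflexivity|exists (n + K); reflexivity].
Qed.

Lemma Ends_ext (C D : Ends G) : (forall r, proj1_sig C r <-> proj1_sig D r) -> C = D.
Proof.
  destruct C as [c Hc], D as [d Hd]; simpl; intros H.
  assert (c = d) as ->.
  { apply functional_extensionality; intros r; apply propositional_extensionality; auto. }
  f_equal; apply proof_irrelevance.
Qed.

Definition end_of {r} (Hr : ray_or_antiray G r) : Ends G :=
  exist _ (fun r' => ray_or_antiray G r' /\ end_equiv G r r')
    (ex_intro _ r (conj Hr (fun r' => iff_refl _))).

Definition end_rep (C : Ends G) : nat -> V :=
  proj1_sig (constructive_indefinite_description _ (proj2_sig C)).

Lemma end_rep_spec (C : Ends G) : ray_or_antiray G (end_rep C) /\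
  forall r, proj1_sig C r <-> ray_or_antiray G r /\ end_equiv G (end_rep C) r.
Proof. unfold end_rep; destruct (constructive_indefinite_description _ _); exact a. Qed.

Lemma end_rep_mem (C : Ends G) : proj1_sig C (end_rep C).
Proof.
  destruct (end_rep_spec C) as [H HC]; apply HC; split; [exact H|exact (end_equiv_refl H)].
Qed.

Lemma end_of_ext {r r'} (Hr : ray_or_antiray G r) (Hr' : ray_or_antiray G r') :
  end_equiv G r r' -> end_of Hr = end_of Hr'.
Proof.
  intros E; apply Ends_ext; intros q; simpl; split; intros [Hq Eq]; split; auto.
  - exact (end_equiv_trans Hr (end_equiv_sym E) Eq).
  - exact (end_equiv_trans Hr' E Eq).
Qed.

Lemma end_of_equiv {r r'} (Hr : ray_or_antiray G r) (Hr' : ray_or_antiray G r') :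
  end_of Hr = end_of Hr' -> end_equiv G r r'.
Proof.
  intros E; assert (H : proj1_sig (end_of Hr') r') by (split; [exact Hr'|exact (end_equiv_refl Hr')]).
  rewrite <- E in H; exact (proj2 H).
Qed.

Lemma end_of_rep (C : Ends G) : C = end_of (proj1 (end_rep_spec C)).
Proof. apply Ends_ext; intros r; apply (end_rep_spec C). Qed.

Lemma end_rep_of {r} (Hr : ray_or_antiray G r) : end_equiv G r (end_rep (end_of Hr)).
Proof. exact (proj2 (end_rep_mem (end_of Hr))). Qed.

Lemma end_le_rep (C D : Ends G) :
  end_le C D <-> reach_le G (vset (end_rep C)) (vset (end_rep D)).
Proof.
  destruct (end_rep_spec C) as [RC HC], (end_rep_spec D) as [RD HD]; split.
  - intros (r & r' & Hr & Hr' & H); apply HC in Hr as [Hr EC]; apply HD in Hr' as [Hr' ED].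
    exact (reach_le_end_equiv Hr Hr' (end_equiv_sym EC) (end_equiv_sym ED) H).
  - intros H; exists (end_rep C), (end_rep D); split; [|split]; auto using end_rep_mem.
Qed.

End Ends.

Section SubgraphEnds.
Context {V : Type} {G G' : digraph V}.
Hypothesis vert_sub : forall x, vert G x -> vert G' x.
Hypothesis edge_sub : forall x y, edge G x y -> edge G' x y.
Hypothesis reach_le_back : forall r r', ray_or_antiray G r -> ray_or_antiray G r' ->
  reach_le G' (vset r) (vset r') -> reach_le G (vset r) (vset r').
Hypothesis ray_equiv_sub : forall q, ray_or_antiray G' q ->
  exists r, ray_or_antiray G r /\ end_equiv G' r q.

Let roa_sub {r : nat -> V} (Hr : ray_or_antiray G r) : ray_or_antiray G' r :=
  ray_or_antiray_sub vert_sub edge_sub Hr.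

Definition end_lift (C : Ends G) : Ends G' := end_of (roa_sub (proj1 (end_rep_spec C))).

Lemma end_lift_rep (C : Ends G) : end_equiv G' (end_rep C) (end_rep (end_lift C)).
Proof. apply end_rep_of. Qed.

Lemma end_lift_inj (C D : Ends G) : end_lift C = end_lift D -> C = D.
Proof.
  intros E; apply end_of_equiv in E as [E1 E2].
  destruct (end_rep_spec C) as [RC _], (end_rep_spec D) as [RD _].
  rewrite (end_of_rep C), (end_of_rep D); apply end_of_ext; split; apply reach_le_back; auto.
Qed.

Lemma end_lift_surj (D : Ends G') : exists C, end_lift C = D.
Proof.
  destruct (end_rep_spec D) as [RD _]; destruct (ray_equiv_sub _ RD) as (r & Hr & E).
  exists (end_of Hr); rewrite (end_of_rep D); apply end_of_ext.
  refine (end_equiv_trans (roa_sub Hr) _ E).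
  apply end_equiv_sym, (end_equiv_sub vert_sub edge_sub), end_rep_of.
Qed.

Lemma end_lift_le (C D : Ends G) : end_le C D <-> end_le (end_lift C) (end_lift D).
Proof.
  destruct (end_rep_spec C) as [RC _], (end_rep_spec D) as [RD _].
  rewrite !end_le_rep; split; intros H.
  - exact (reach_le_end_equiv (roa_sub RC) (roa_sub RD) (end_lift_rep C) (end_lift_rep D)
             (reach_le_sub vert_sub edge_sub H)).
  - apply reach_le_back; auto.
    destruct (end_rep_spec (end_lift C)) as [RC' _], (end_rep_spec (end_lift D)) as [RD' _].
    exact (reach_le_end_equiv RC' RD' (end_equiv_sym (end_lift_rep C))
             (end_equiv_sym (end_lift_rep D)) H).
Qed.

Lemma subgraph_ends_iso : ends_iso G G'.
Proof.
  exists end_lift; split; [exact end_lift_inj|split; [exact end_lift_surj|exact end_lift_le]].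
Qed.

End SubgraphEnds.

Lemma path_app_l {V : Type} {G : digraph V} {p e : list V} :
  p <> [] -> is_path G (p ++ e) -> is_path G p.
Proof.
  intros Hp (_ & Hnd & Hf & Hc); repeat split; auto.
  - exact (NoDup_app_remove_r _ _ Hnd).
  - apply Forall_app in Hf; tauto.
  - exact (chain_app_l Hc).
Qed.

Lemma pigeonhole_unbounded {V : Type} (l : list V) (Q : V -> nat -> Prop) :
  (forall w n m, m <= n -> Q w n -> Q w m) -> (forall n, exists w, In w l /\ Q w n) ->
  exists w, In w l /\ forall n, Q w n.
Proof.
  intros Hm H; apply NNPP; intros Hn.
  assert (K : forall l', incl l' l -> exists N, forall w, In w l' -> ~ Q w N).
  { induction l' as [|a l' IH]; intros Hi; [exists 0; intros w []|].
    destruct IH as [N1 HN1]; [intros x Hx; apply Hi; now right|].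
    assert (Ha : exists n, ~ Q a n).
    { apply NNPP; intros Ha; apply Hn; exists a; split; [apply Hi; now left|].
      intros n; apply NNPP; intros Hq; apply Ha; exists n; exact Hq. }
    destruct Ha as [n Hn']; exists (N1 + n); intros w [<-|Hw] Hq.
    - apply Hn', (Hm a (N1 + n)); auto; lia.
    - apply (HN1 w Hw), (Hm w (N1 + n)); auto; lia. }
  destruct (K l (incl_refl l)) as [N HN]; destruct (H N) as (w & Hw & Hq); exact (HN w Hw Hq).
Qed.

Section Konig.
Context {V : Type} (E : V -> V -> Prop) (N : V -> Prop) (nb : V -> list V) (roots : list V).
Hypothesis nb_spec : forall v w, N v -> N w -> E v w -> In w (nb v).
Hypothesis unbounded : forall l : list V,
  exists v, ~ In v l /\ exists x, In x roots /\ exists lw, walk (Digraph N E) x lw v.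

Let D := Digraph N E.

Fixpoint ball n := match n with 0 => roots | S n' => ball n' ++ flat_map nb (ball n') end.

Lemma ball_mono m n : m <= n -> incl (ball m) (ball n).
Proof. induction 1; [apply incl_refl|simpl; apply incl_appl; auto]. Qed.

Lemma walk_in_ball {l x y} : In x roots -> walk D x l y -> In y (ball (length l)).
Proof.
  revert y; induction l as [|z l IH] using rev_ind; intros y Hx Hw.
  - destruct Hw as (_ & _ & Hl); simpl in Hl; subst; exact Hx.
  - pose proof (walk_end_vert Hw) as Hy.
    apply walk_snoc_inv in Hw as (<- & z' & Hw & He).
    rewrite length_app, Nat.add_1_r; simpl; apply in_or_app; right.
    apply in_flat_map; exists z'; split; [exact (IH _ Hx Hw)|].
    apply nb_spec; auto; exact (walk_end_vert Hw).
Qed.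

Lemma long_paths n : exists x, In x roots /\ exists l, is_path D (x :: l) /\ n <= length l.
Proof.
  destruct (unbounded (ball n)) as (v & Hv & x & Hx & lw & Hw).
  destruct (walk_to_path Hw) as (l & Hp & Hl & _).
  exists x; split; auto; exists l; split; auto.
  destruct (Nat.le_gt_cases n (length l)) as [H|H]; auto; exfalso; apply Hv.
  apply (ball_mono (length l) n); [lia|]; rewrite <- Hl.
  apply (walk_in_ball Hx); destruct Hp as (_ & _ & Hf & Hc); repeat split; auto.
Qed.

Definition extensible (p : list V) := forall n, exists e, is_path D (p ++ e) /\ n <= length e.

Lemma extensible_root : exists x, In x roots /\ extensible [x].
Proof.
  apply (pigeonhole_unbounded roots (fun x n => exists e, is_path D ([x] ++ e) /\ n <= length e)).
  - intros w n m Hmn (e & He & Hl); exists e; split; auto; lia.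
  - intros n; destruct (long_paths n) as (x & Hx & l & Hp & Hl); exists x; split; [exact Hx|exists l; auto].
Qed.

Lemma extensible_step {p} : p <> [] -> extensible p -> exists w, extensible (p ++ [w]).
Proof.
  destruct p as [|a q]; [congruence|]; intros Hp Hg.
  destruct (pigeonhole_unbounded (nb (last (a :: q) a))
     (fun w n => exists e, is_path D (((a :: q) ++ [w]) ++ e) /\ n <= length e)) as (w & _ & Hw).
  - intros w n m Hmn (e & He & Hl); exists e; split; auto; lia.
  - intros n; destruct (Hg (S n)) as ([|w e] & He & Hl); simpl in Hl; [lia|].
    exists w; split.
    + destruct He as (_ & _ & Hf & Hc); rewrite Forall_forall in Hf; apply nb_spec.
      * apply Hf, in_or_app; left; apply last_in_cons.
      * apply Hf, in_or_app; right; now left.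
      * exact (chain_app_last _ Hp Hc).
    + exists e; rewrite <- app_assoc; split; auto; lia.
  - exists w; exact Hw.
Qed.

Section KonigRay.
Variables (x0 : V) (next : list V -> V).
Hypothesis x0_ext : extensible [x0].
Hypothesis next_ext : forall {p}, p <> [] -> extensible p -> extensible (p ++ [next p]).

Fixpoint prefix n := match n with 0 => [x0] | S n' => prefix n' ++ [next (prefix n')] end.

Definition konig_ray n := last (prefix n) x0.

Lemma prefix_spec n : prefix n <> [] /\ extensible (prefix n).
Proof.
  induction n as [|n [Hn Hx]]; [split; [discriminate|exact x0_ext]|].
  split; [simpl; destruct (prefix n); [congruence|discriminate]|exact (next_ext Hn Hx)].
Qed.

Lemma prefix_path n : is_path D (prefix n).
Proof.
  destruct (prefix_spec n) as [Hn Hx]; destruct (Hx 0) as (e & He & _).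
  exact (path_app_l Hn He).
Qed.

Lemma prefix_S n : prefix (S n) = prefix n ++ [konig_ray (S n)].
Proof. unfold konig_ray; simpl; rewrite last_last; reflexivity. Qed.

Lemma konig_ray_in m n : m <= n -> In (konig_ray m) (prefix n).
Proof.
  induction 1 as [|n Hmn IH].
  - unfold konig_ray; destruct (prefix_spec m) as [Hm _]; destruct (prefix m); [congruence|].
    apply last_in_cons.
  - rewrite prefix_S; apply in_or_app; now left.
Qed.

Lemma konig_ray_spec : (forall n, N (konig_ray n)) /\ injective konig_ray /\
  forall n, E (konig_ray n) (konig_ray (S n)).
Proof.
  split; [|split].
  - intros n; destruct (prefix_path n) as (_ & _ & Hf & _); rewrite Forall_forall in Hf.
    apply Hf, konig_ray_in; auto.
  - assert (K : forall i j, i < j -> konig_ray i <> konig_ray j).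
    { intros i [|j] Hij Heq; [lia|].
      destruct (prefix_path (S j)) as (_ & Hnd & _); rewrite prefix_S in Hnd.
      apply NoDup_remove_2 in Hnd; rewrite app_nil_r in Hnd.
      apply Hnd; rewrite <- Heq; apply konig_ray_in; lia. }
    intros i j Hij; destruct (Nat.lt_trichotomy i j) as [H|[H|H]]; auto;
      [exfalso; exact (K _ _ H Hij)|exfalso; exact (K _ _ H (eq_sym Hij))].
  - intros n; destruct (prefix_path (S n)) as (_ & _ & _ & Hc); rewrite prefix_S in Hc.
    exact (chain_app_last x0 (proj1 (prefix_spec n)) Hc).
Qed.

End KonigRay.

Lemma konig : exists r : nat -> V, (forall n, N (r n)) /\ injective r /\ forall n, E (r n) (r (S n)).
Proof.
  destruct extensible_root as (x0 & _ & H0).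
  assert (Hnext : forall p, exists w, p <> [] -> extensible p -> extensible (p ++ [w])).
  { intros p; destruct (classic (p <> [] /\ extensible p)) as [[Hp Hx]|Hn].
    - destruct (extensible_step Hp Hx) as [w Hw]; exists w; auto.
    - exists x0; intros Hp Hx; exfalso; auto. }
  apply choice in Hnext as [next Hnext].
  exists (konig_ray x0 next); exact (konig_ray_spec x0 next H0 Hnext).
Qed.

End Konig.

Section CayleyGraphs.
Context {V : Type} (op : V -> V -> V).
Hypothesis op_assoc : forall x y z, op x (op y z) = op (op x y) z.
Context (A : V -> Prop) (Al : list V) (s : V) (Fl : list V).
Hypothesis Al_spec : forall x, A x -> In x Al.

Let T := gen op A.
Let As g := A g \/ g = s.
Let Ts := gen op (fun x => T x \/ x = s).
Let F x := Ts x /\ ~ T x.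
Hypothesis Fl_spec : forall x, F x -> In x Fl.
Let GT := cayley_r op T A.
Let GTs := cayley_r op Ts As.

Lemma T_op {x y} : T x -> T y -> T (op x y).
Proof. apply gen_op. Qed.

Lemma A_T {a} : A a -> T a.
Proof. apply gen_base. Qed.

Lemma T_Ts {x} : T x -> Ts x.
Proof. intros H; apply gen_base; now left. Qed.

Lemma As_Ts {g} : As g -> Ts g.
Proof. intros [H| ->]; [exact (T_Ts (A_T H))|apply gen_base; now right]. Qed.

Lemma GT_edge {x a} : T x -> A a -> edge GT x (op x a).
Proof. intros Hx Ha; split; eauto. Qed.

Lemma GT_GTs_vert x : vert GT x -> vert GTs x.
Proof. exact (@T_Ts x). Qed.

Lemma GT_GTs_edge x y : edge GT x y -> edge GTs x y.
Proof. intros (Hx & a & Ha & ->); split; [exact (T_Ts Hx)|exists a; split; [now left|reflexivity]]. Qed.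

Lemma word_of_T {x} : T x -> exists L, Forall A L /\ forall y, fold_left op L y = op y x.
Proof.
  induction 1 as [x Hx|x1 x2 _ (L1 & F1 & E1) _ (L2 & F2 & E2)].
  - exists [x]; split; auto.
  - exists (L1 ++ L2); split; [apply Forall_app; auto|].
    intros y; rewrite fold_left_app, E1, E2; symmetry; apply op_assoc.
Qed.

Lemma fold_left_T {L y} : Forall A L -> T y -> T (fold_left op L y).
Proof.
  revert y; induction L as [|a L IH]; intros y HL Hy; simpl; auto.
  inversion HL; subst; apply IH; auto; exact (T_op Hy (A_T H1)).
Qed.

Fixpoint word_walk (y : V) (L : list V) : list V :=
  match L with [] => [] | a :: L' => op y a :: word_walk (op y a) L' end.

Lemma word_walk_spec {L y} : Forall A L -> T y -> walk GT y (word_walk y L) (fold_left op L y).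
Proof.
  revert y; induction L as [|a L IH]; intros y HL Hy; simpl; [apply walk_nil; exact Hy|].
  inversion HL; subst; apply walk_cons; auto; [exact (GT_edge Hy H1)|].
  apply IH; auto; exact (T_op Hy (A_T H1)).
Qed.

Lemma in_word_walk {L y v} :
  In v (y :: word_walk y L) -> exists L1 L2, L = L1 ++ L2 /\ v = fold_left op L1 y.
Proof.
  revert y; induction L as [|a L IH]; intros y [<-|H].
  - exists [], []; auto.
  - destruct H.
  - exists [], (a :: L); auto.
  - destruct (IH _ H) as (L1 & L2 & -> & ->); exists (a :: L1), L2; auto.
Qed.

Lemma word_walk_prefix_in L1 L2 y : In (fold_left op L1 y) (y :: word_walk y (L1 ++ L2)).
Proof.
  revert y; induction L1 as [|a L1 IH]; intros y; [now left|].
  right; apply IH.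
Qed.

(* The elements that need a word over [A] when they lie in [T]: [s] itself, for the steps
   [y -> y s], and the products [g f] met when tracing an offset [y' g f] backwards. *)
Definition short (v : V) := v = s \/ exists g f, As g /\ F f /\ v = op g f.

Lemma short_words : exists WL : list (list V), (forall L, In L WL -> Forall A L) /\
  forall v, T v -> short v -> exists L, In L WL /\ forall y, fold_left op L y = op y v.
Proof.
  set (cands := s :: flat_map (fun g => map (op g) Fl) (s :: Al)).
  assert (Hc : forall v, short v -> In v cands).
  { intros v [->|(g & f & Hg & Hf & ->)]; [now left|right].
    apply in_flat_map; exists g; split; [destruct Hg as [Hg| ->]; [right; auto|now left]|].
    apply in_map, Fl_spec, Hf. }
  assert (K : forall l, exists WL : list (list V), (forall L, In L WL -> Forall A L) /\
    forall v, T v -> In v l -> exists L, In L WL /\ forall y, fold_left op L y = op y v).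
  { induction l as [|a l (WL & HA & Hl)]; [exists []; split; [intros L []|intros v _ []]|].
    destruct (classic (T a)) as [Ha|Ha].
    - destruct (word_of_T Ha) as (La & HLa & Ea); exists (La :: WL); split.
      + intros L [<-|HL]; auto.
      + intros v Hv [<-|Hin]; [exists La; split; auto; now left|].
        destruct (Hl v Hv Hin) as (L & HL & E); exists L; split; auto; now right.
    - exists WL; split; auto; intros v Hv [<-|Hin]; [contradiction|auto]. }
  destruct (K cands) as (WL & HA & Hl); exists WL; split; [exact HA|].
  intros v Hv Hs; exact (Hl v Hv (Hc v Hs)).
Qed.

Section Shadows.
Variable WL : list (list V).
Hypothesis WL_A : forall L, In L WL -> Forall A L.
Hypothesis WL_short : forall {v}, T v -> short v ->
  exists L, In L WL /\ forall y, fold_left op L y = op y v.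

Definition shadow (t y : V) := exists L, In L WL /\ t = fold_left op L y.

Definition F_offset (t y : V) := exists f, F f /\ t = op y f.

Lemma trace_s y : shadow (op y s) y \/ F_offset (op y s) y.
Proof.
  destruct (classic (T s)) as [H|H].
  - left; destruct (WL_short H (or_introl eq_refl)) as (L & HL & E); exists L; auto.
  - right; exists s; split; auto; split; [apply As_Ts; now right|exact H].
Qed.

(* [t = y' (g f)], and [g f] is either in [T], hence given by a short word, or in [F]. *)
Lemma trace_step {t y y' g} : F_offset t y -> y = op y' g -> As g -> shadow t y' \/ F_offset t y'.
Proof.
  intros (f & Hf & ->) -> Hg; rewrite <- op_assoc.
  destruct (classic (T (op g f))) as [H|H].
  - left; destruct (WL_short H) as (L & HL & E); [right; exists g, f; auto|].
    exists L; auto.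
  - right; exists (op g f); repeat split; auto.
    apply gen_op; [exact (As_Ts Hg)|exact (proj1 Hf)].
Qed.

Lemma F_offset_card y : card_le (fun t => F_offset t y) (length Fl).
Proof.
  rewrite <- (length_map (op y) Fl); apply card_le_of_incl.
  intros t (f & Hf & ->); apply in_map, Fl_spec, Hf.
Qed.

Lemma trace_walk {z0 l z' t} : walk GTs z0 l z' -> F_offset t z' ->
  (exists y, In y (z0 :: l) /\ shadow t y) \/ F_offset t z0.
Proof.
  revert z'; induction l as [|z l IH] using rev_ind; intros z' Hw Ht.
  - destruct Hw as (_ & _ & Hl); simpl in Hl; subst; now right.
  - apply walk_snoc_inv in Hw as (<- & z'' & Hw & _ & g & Hg & Eg).
    assert (Hin : incl (z0 :: l) (z0 :: l ++ [z])) by (intros v [<-|Hv]; [now left|right; apply in_or_app; now left]).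
    destruct (trace_step Ht Eg Hg) as [Hs|Hs].
    + left; exists z''; split; [apply Hin, (walk_end_in Hw)|exact Hs].
    + destruct (IH _ Hw Hs) as [(y & Hy & Hsy)|H]; [left; exists y; auto|now right].
Qed.

Definition fwd_steps (y : nat -> V) := forall i, exists g, As g /\ y (S i) = op (y i) g.

Definition bwd_steps (y : nat -> V) := forall i, exists g, As g /\ y i = op (y (S i)) g.

Lemma trace_fwd {y} : fwd_steps y -> forall {m t}, F_offset t (y m) ->
  (exists k, k <= m /\ shadow t (y k)) \/ F_offset t (y 0).
Proof.
  intros Hy m; induction m as [|m IH]; intros t Ht; [now right|].
  destruct (Hy m) as (g & Hg & Eg); destruct (trace_step Ht Eg Hg) as [Hs|Hs].
  - left; exists m; split; auto.
  - destruct (IH t Hs) as [(k & Hk & Hsk)|H]; [left; exists k; split; auto|now right].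
Qed.

Lemma trace_bwd {y} : bwd_steps y -> forall {m} d {t}, F_offset t (y m) ->
  (exists k, m <= k /\ shadow t (y k)) \/ F_offset t (y (m + d)).
Proof.
  intros Hy m d t Ht; induction d as [|d [(k & Hk & Hsk)|Hs]].
  - right; rewrite Nat.add_0_r; exact Ht.
  - left; exists k; auto.
  - destruct (Hy (m + d)) as (g & Hg & Eg); destruct (trace_step Hs Eg Hg) as [Hs'|Hs'].
    + left; exists (S (m + d)); split; [lia|exact Hs'].
    + right; rewrite Nat.add_succ_r; exact Hs'.
Qed.

Lemma GTs_ray_fwd_steps {y} : is_ray GTs y -> fwd_steps y.
Proof. intros (_ & _ & He) i; exact (proj2 (He i)). Qed.

Lemma GTs_antiray_bwd_steps {y} : is_antiray GTs y -> bwd_steps y.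
Proof. intros (_ & _ & He) i; exact (proj2 (He i)). Qed.

(* Where tracing an offset back along [r] can fail: at the start of a ray, or forever along an
   anti-ray. *)
Definition stuck (r : nat -> V) (v : V) :=
  F_offset v (r 0) \/ exists M0, forall M, M0 <= M -> F_offset v (r M).

Lemma stuck_card r : card_le (fun v => F v \/ stuck r v) (length Fl + (length Fl + length Fl)).
Proof.
  apply card_le_union; [exact (card_le_of_incl Fl_spec)|].
  apply card_le_union; [exact (F_offset_card (r 0))|].
  intros l Hl H; destruct (eventually_forall_list _ l H) as [M HM].
  exact (F_offset_card (r M) l Hl HM).
Qed.

Lemma trace_ray_or_antiray {r m t} : ray_or_antiray GT r -> F_offset t (r m) ->
  (exists k, shadow t (r k)) \/ stuck r t.
Proof.
  intros [Hr|Ha] Ht.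
  - destruct (trace_fwd (GTs_ray_fwd_steps (is_ray_sub GT_GTs_vert GT_GTs_edge Hr)) Ht)
      as [(k & _ & Hk)|H]; [left; eauto|right; now left].
  - destruct (classic (exists k, shadow t (r k))) as [H|H]; [now left|right; right].
    exists m; intros M HM.
    destruct (trace_bwd (GTs_antiray_bwd_steps (is_antiray_sub GT_GTs_vert GT_GTs_edge Ha)) (M - m) Ht)
      as [(k & _ & Hk)|H']; [exfalso; eauto|].
    replace (m + (M - m)) with M in H' by lia; exact H'.
Qed.

(* Finitely many points: those reached from [v] by a segment of a short word. *)
Definition ahead (v : V) : list V :=
  v :: flat_map (fun suf => v :: word_walk v suf) (flat_map suffixes WL).

Lemma ahead_in L1 L2 L3 v : In (L1 ++ L2 ++ L3) WL -> In (fold_left op L2 v) (ahead v).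
Proof.
  intros HL; right; apply in_flat_map; exists (L2 ++ L3); split; [|apply word_walk_prefix_in].
  apply in_flat_map; exists (L1 ++ L2 ++ L3); split; [exact HL|apply suffixes_in].
Qed.

Definition controlled (P : list V) (v : V) := exists u, In u (ahead v) /\ In u P.

Lemma controlled_bounded_index {P : nat -> list V} :
  disjoint_family P -> bounded_index (fun v n => exists i, n <= i /\ controlled (P i) v).
Proof.
  intros HP v; destruct (bounded_index_list (disjoint_bounded_index HP) (ahead v)) as [B HB].
  exists B; intros n (i & Hi & u & Hu & HuP); specialize (HB i u Hu HuP); lia.
Qed.

Lemma word_walk_controlled {L y t P} : In L WL -> t = fold_left op L y -> In t P ->
  forall v, In v (y :: word_walk y L) -> controlled P v.
Proof.
  intros HL -> HtP v Hv; destruct (in_word_walk Hv) as (L1 & L2 & -> & ->).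
  exists (fold_left op L2 (fold_left op L1 y)); split; [|rewrite <- fold_left_app; exact HtP].
  apply (ahead_in L1 L2 []); rewrite app_nil_r; exact HL.
Qed.

Definition reached (r : nat -> V) (P : list V) (w : V) :=
  exists x lw, walk GT x lw w /\ vset r x /\ forall v, In v (x :: lw) -> controlled P v.

Lemma reached_edge {r P y a} : reached r P y -> T y -> A a -> In (op y a) P -> reached r P (op y a).
Proof.
  intros (x & lw & Hw & Hx & Hc) Hy Ha HP; exists x, (lw ++ [op y a]); split; [|split; auto].
  - apply (walk_snoc Hw); [exact (GT_edge Hy Ha)|exact (T_op Hy (A_T Ha))].
  - intros v Hv; rewrite app_comm_cons in Hv; apply in_app_or in Hv as [Hv|[<-|[]]]; auto.
    exists (op y a); split; [now left|exact HP].
Qed.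

Lemma reached_shadow {r P y t} : reached r P y -> T y -> shadow t y -> In t P -> reached r P t.
Proof.
  intros (x & lw & Hw & Hx & Hc) Hy (L & HL & Ht) HP; exists x, (lw ++ word_walk y L).
  split; [|split; auto].
  - rewrite Ht; exact (walk_app Hw (word_walk_spec (WL_A L HL) Hy)).
  - intros v Hv; rewrite app_comm_cons in Hv; apply in_app_or in Hv as [Hv|Hv]; auto.
    exact (word_walk_controlled HL Ht HP v (or_intror Hv)).
Qed.

Lemma reached_ray_shadow {r P k t} : T (r k) -> shadow t (r k) -> In t P -> reached r P t.
Proof.
  intros Hy (L & HL & Ht) HP; exists (r k), (word_walk (r k) L); split; [|split].
  - rewrite Ht; exact (word_walk_spec (WL_A L HL) Hy).
  - exists k; reflexivity.
  - exact (word_walk_controlled HL Ht HP).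
Qed.

Section ShadowedWalk.
Context {r : nat -> V} (Hr : ray_or_antiray GT r) {P : list V}.

(* An [s]-step of a [GTs]-walk starting on [r] is recovered by tracing the offset back along the
   walk and then along [r] to a shadow; only a stuck vertex escapes. *)
Lemma reached_s_step {z0 l z} : walk GTs z0 l z -> vset r z0 ->
  (forall v, In v (z0 :: l) -> T v /\ reached r P v) ->
  In (op z s) P -> ~ stuck r (op z s) -> reached r P (op z s).
Proof.
  intros Hw [m Hm] Hl HP Hst.
  destruct (trace_s z) as [Hs|Ho].
  - exact (reached_shadow (proj2 (Hl z (walk_end_in Hw))) (proj1 (Hl z (walk_end_in Hw))) Hs HP).
  - destruct (trace_walk Hw Ho) as [(y & Hy & Hs)|Ho'].
    + exact (reached_shadow (proj2 (Hl y Hy)) (proj1 (Hl y Hy)) Hs HP).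
    + rewrite <- Hm in Ho'; destruct (trace_ray_or_antiray Hr Ho') as [(k & Hk)|H]; [|contradiction].
      exact (reached_ray_shadow (ray_or_antiray_vert Hr k) Hk HP).
Qed.

Lemma walk_reached {z0 l z} : walk GTs z0 l z -> vset r z0 -> incl (z0 :: l) P ->
  (forall v, In v (z0 :: l) -> T v /\ ~ stuck r v) -> forall w, In w (z0 :: l) -> reached r P w.
Proof.
  revert z; induction l as [|z' l IH] using rev_ind; intros z Hw Hz0 HP Hgood w Hin.
  - destruct Hin as [<-|[]]; exists z0, []; split; [apply walk_nil; apply Hgood; now left|].
    split; [exact Hz0|intros v [<-|[]]; exists z0; split; [now left|apply HP; now left]].
  - assert (Hincl : incl (z0 :: l) (z0 :: l ++ [z'])).
    { intros v [<-|Hv]; [now left|right; apply in_or_app; now left]. }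
    apply walk_snoc_inv in Hw as (<- & z'' & Hw & He).
    assert (IH' : forall v, In v (z0 :: l) -> T v /\ reached r P v).
    { intros v Hv; split; [apply Hgood, Hincl, Hv|].
      exact (IH z'' Hw Hz0 (fun u Hu => HP u (Hincl u Hu)) (fun u Hu => Hgood u (Hincl u Hu)) v Hv). }
    rewrite app_comm_cons in Hin; apply in_app_or in Hin as [Hin|[<-|[]]]; [apply IH', Hin|].
    assert (Hz : In z' (z0 :: l ++ [z'])) by (right; apply in_or_app; right; now left).
    destruct He as (_ & g & [Ha| ->] & ->).
    + apply (reached_edge (proj2 (IH' _ (walk_end_in Hw)))); auto.
      exact (proj1 (IH' _ (walk_end_in Hw))).
    + apply (reached_s_step Hw Hz0 IH'); auto; apply Hgood, Hz.
Qed.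

End ShadowedWalk.

Lemma reach_le_back_cayley {r Y} : ray_or_antiray GT r ->
  reach_le GTs (vset r) Y -> reach_le GT (vset r) Y.
Proof.
  intros Hr HrY; destruct (reach_le_walks HrY) as (x & z & l & HP & HPd).
  destruct (disjoint_family_avoid HPd (stuck_card r)) as [B HB].
  apply (reach_le_of_walks _ (controlled_bounded_index HPd)).
  intros n; destruct (HP (n + B)) as (Hw & Hx & Hz).
  assert (Hgood : forall v, In v (x (n + B) :: l (n + B)) -> T v /\ ~ stuck r v).
  { intros v Hv; pose proof (HB (n + B) ltac:(lia) v Hv) as Hn; split; [|tauto].
    apply NNPP; intros Ht; apply Hn; left; split; [exact (walk_vert Hw Hv)|exact Ht]. }
  destruct (walk_reached Hr Hw Hx (incl_refl _) Hgood _ (walk_end_in Hw)) as (x' & lw & W & Hx' & Hc).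
  exists x', lw, (z (n + B)); split; [exact W|split; [exact Hx'|split; [exact Hz|]]].
  intros v Hv; exists (n + B); split; [lia|exact (Hc v Hv)].
Qed.

Section Tube.
Context (q : nat -> V) (q_inj : injective q) (q_T : forall k, T (q k)).
Context (src : nat -> nat) (wd : nat -> list V).

Definition linked (j : nat) := In (wd j) WL /\ q j = fold_left op (wd j) (q (src j)).

Definition tube (v : V) := (exists k, q k = v) \/
  exists j L1 L2, linked j /\ wd j = L1 ++ L2 /\ v = fold_left op L1 (q (src j)).

Lemma tube_T {v} : tube v -> T v.
Proof.
  intros [(k & <-)|(j & L1 & L2 & (HL & _) & E & ->)]; [apply q_T|].
  apply fold_left_T; [|apply q_T].
  apply WL_A in HL; rewrite E in HL; apply Forall_app in HL; tauto.
Qed.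

Lemma tube_word_walk {j} : linked j ->
  walk (Digraph tube (edge GT)) (q (src j)) (word_walk (q (src j)) (wd j)) (q j).
Proof.
  intros [HL Hq]; rewrite Hq; apply walk_restrict; [exact (word_walk_spec (WL_A _ HL) (q_T _))|].
  intros v Hv; destruct (in_word_walk Hv) as (L1 & L2 & E & ->); right; exists j, L1, L2; repeat split; auto.
Qed.


Lemma tube_reach_q {r} : injective r -> (forall n, tube (r n)) -> reach_le GTs (vset r) (vset q).
Proof.
  intros Hr HN; apply (reach_le_of_walks (fun v n => r n = v \/
    exists j L1 L2a L2b, linked j /\ wd j = L1 ++ L2a ++ L2b /\
      r n = fold_left op L1 (q (src j)) /\ v = fold_left op L2a (r n))).
  - intros v; destruct (injective_bounded_index Hr v) as [B1 H1].
    destruct (injective_list_bound q_inj (ahead v)) as [Bj HBj].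
    destruct (injective_list_bound Hr (flat_map (fun j => q (src j) :: word_walk (q (src j)) (wd j))
      (seq 0 Bj))) as [Bn HBn].
    exists (B1 + Bn); intros n [Hn|(j & L1 & L2a & L2b & [HL Hq] & E & Er & Ev)]; [apply H1 in Hn; lia|].
    enough (n < Bn) by lia; apply HBn, in_flat_map; exists j; split.
    + apply in_seq; split; [lia|]; apply HBj.
      rewrite Hq, E, !fold_left_app, <- Er, <- Ev.
      apply (ahead_in (L1 ++ L2a) L2b []); rewrite app_nil_r, <- app_assoc, <- E; exact HL.
    + rewrite Er, E; apply word_walk_prefix_in.
  - intros n; destruct (HN n) as [(k & Hk)|(j & L1 & L2 & [HL Hq] & E & Ev)].
    + exists (r n), [], (r n); split; [apply walk_nil; exact (T_Ts (tube_T (HN n)))|].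
      split; [exists n; reflexivity|split; [exists k; exact Hk|intros v [<-|[]]; now left]].
    + assert (HL2 : Forall A L2) by (apply WL_A in HL; rewrite E in HL; apply Forall_app in HL; tauto).
      exists (r n), (word_walk (r n) L2), (q j); split; [|split; [exists n; reflexivity|split; [exists j; reflexivity|]]].
      * apply (walk_sub GT_GTs_vert GT_GTs_edge).
        rewrite Hq, E, fold_left_app, <- Ev; exact (word_walk_spec HL2 (tube_T (HN n))).
      * intros v Hv; destruct (in_word_walk Hv) as (L2a & L2b & E2 & ->); right.
        exists j, L1, L2a, L2b; repeat split; auto; rewrite E, E2; reflexivity.
Qed.

Lemma q_reach_tube {r} : injective r -> (forall n, tube (r n)) -> reach_le GTs (vset q) (vset r).
Proof.
  intros Hr HN; apply (reach_le_of_walks (fun v n => r n = v \/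
    exists j L1a L1b L2, linked j /\ wd j = L1a ++ L1b ++ L2 /\
      v = fold_left op L1a (q (src j)) /\ r n = fold_left op L1b v)).
  - intros v; destruct (injective_bounded_index Hr v) as [B1 H1].
    destruct (injective_list_bound Hr (ahead v)) as [Bn HBn].
    exists (B1 + Bn); intros n [Hn|(j & L1a & L1b & L2 & [HL _] & E & Ev & Er)]; [apply H1 in Hn; lia|].
    enough (n < Bn) by lia; apply HBn; rewrite Er; apply (ahead_in L1a L1b L2); rewrite <- E; exact HL.
  - intros n; destruct (HN n) as [(k & Hk)|(j & L1 & L2 & [HL Hq] & E & Ev)].
    + exists (r n), [], (r n); split; [apply walk_nil; exact (T_Ts (tube_T (HN n)))|].
      split; [exists k; exact Hk|split; [exists n; reflexivity|intros v [<-|[]]; now left]].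
    + assert (HL1 : Forall A L1) by (apply WL_A in HL; rewrite E in HL; apply Forall_app in HL; tauto).
      exists (q (src j)), (word_walk (q (src j)) L1), (r n).
      split; [|split; [exists (src j); reflexivity|split; [exists n; reflexivity|]]].
      * apply (walk_sub GT_GTs_vert GT_GTs_edge); rewrite Ev; exact (word_walk_spec HL1 (q_T _)).
      * intros v Hv; destruct (in_word_walk Hv) as (L1a & L1b & E1 & ->); right.
        exists j, L1a, L1b, L2; repeat split; auto.
        -- rewrite E, E1, <- app_assoc; reflexivity.
        -- rewrite Ev, E1, fold_left_app; reflexivity.
Qed.

Section TubeSteps.
Variable J : nat.

(* Only these edges of [GT] are kept, so that in-degrees are finite. *)
Definition tube_step (u v : V) := edge GT u v /\
  ((exists k, J <= k /\ u = q (S k) /\ v = q k) \/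
   exists j L1 a L2, linked j /\ wd j = L1 ++ a :: L2 /\ u = fold_left op L1 (q (src j)) /\ v = op u a).

Lemma tube_step_pred_finite v : exists lv, forall u, tube_step u v -> In u lv.
Proof.
  destruct (injective_bounded_index q_inj v) as [B1 H1].
  destruct (injective_list_bound q_inj (ahead v)) as [Bj HBj].
  exists (map (fun k => q (S k)) (seq 0 B1) ++
          flat_map (fun j => q (src j) :: word_walk (q (src j)) (wd j)) (seq 0 Bj)).
  intros u (_ & [(k & _ & -> & Ev)|(j & L1 & a & L2 & [HL Hq] & E & Eu & ->)]); apply in_or_app.
  - left; apply in_map_iff; exists k; split; auto; apply in_seq; symmetry in Ev; apply H1 in Ev; lia.
  - right; apply in_flat_map; exists j; split; [|rewrite Eu, E; apply word_walk_prefix_in].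
    apply in_seq; split; [lia|]; apply HBj.
    rewrite Hq, E, fold_left_app; simpl; rewrite <- Eu.
    apply (ahead_in (L1 ++ [a]) L2 []); rewrite app_nil_r, <- app_assoc; simpl; rewrite <- E; exact HL.
Qed.

Lemma tube_word_walk_back {j} : linked j ->
  exists lw, walk (Digraph tube (fun x y => tube_step y x)) (q j) lw (q (src j)).
Proof.
  intros [HL Hq].
  enough (K : forall L1 L2, wd j = L1 ++ L2 -> exists lw,
    walk (Digraph tube (fun x y => tube_step y x)) (fold_left op L1 (q (src j))) lw (q (src j))).
  { destruct (K (wd j) [] (eq_sym (app_nil_r _))) as [lw Hw]; rewrite Hq; exists lw; exact Hw. }
  intros L1; induction L1 as [|a L1 IH] using rev_ind; intros L2 E.
  - exists []; apply walk_nil; left; exists (src j); reflexivity.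
  - destruct (IH (a :: L2)) as [lw Hw]; [rewrite E, <- app_assoc; reflexivity|].
    assert (HA : Forall A (L1 ++ [a])) by (apply WL_A in HL; rewrite E in HL; apply Forall_app in HL; tauto).
    apply Forall_app in HA as [HA1 HA2]; inversion HA2; subst.
    exists (fold_left op L1 (q (src j)) :: lw); rewrite fold_left_app; apply walk_cons; auto.
    + split; [exact (GT_edge (fold_left_T HA1 (q_T _)) H1)|right].
      exists j, L1, a, L2; repeat split; auto; rewrite E, <- app_assoc; reflexivity.
    + right; exists j, (L1 ++ [a]), L2; repeat split; auto; rewrite fold_left_app; reflexivity.
Qed.

End TubeSteps.

Lemma tube_equiv {r} : injective r -> (forall n, tube (r n)) -> end_equiv GTs r q.
Proof. intros Hr HN; split; [exact (tube_reach_q Hr HN)|exact (q_reach_tube Hr HN)]. Qed.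

End Tube.

Lemma ray_step_source {q} : is_ray GTs q -> exists J, forall k, J <= S k ->
  (exists a, A a /\ q (S k) = op (q k) a) \/
  exists k' L, k' < S k /\ In L WL /\ q (S k) = fold_left op L (q k').
Proof.
  intros Hq; destruct (injective_list_bound (ray_or_antiray_injective (or_introl Hq)) (map (op (q 0)) Fl))
    as [J HJ].
  exists J; intros k Hk; destruct (proj2 (proj2 Hq) k) as (_ & g & [Ha| ->] & Eg); [left; eauto|right].
  destruct (trace_s (q k)) as [(L & HL & Ht)|Ho]; [exists k, L; rewrite Eg; auto|].
  rewrite <- Eg in Ho; destruct (trace_fwd (GTs_ray_fwd_steps Hq) Ho) as [(k' & Hk' & L & HL & Ht)|(f & Hf & Ht)].
  - exists k', L; repeat split; auto; lia.
  - exfalso; enough (S k < J) by lia; apply HJ; rewrite Ht; apply in_map, Fl_spec, Hf.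
Qed.

Lemma GTs_ray_equiv {q} : is_ray GTs q -> (forall k, T (q k)) ->
  exists r, ray_or_antiray GT r /\ end_equiv GTs r q.
Proof.
  intros Hq HqT; destruct (ray_step_source Hq) as [J HJ].
  assert (Hc : forall j, exists p : nat * list V,
    (exists k' L, k' < j /\ In L WL /\ q j = fold_left op L (q k')) ->
    fst p < j /\ In (snd p) WL /\ q j = fold_left op (snd p) (q (fst p))).
  { intros j; destruct (classic (exists k' L, k' < j /\ In L WL /\ q j = fold_left op L (q k')))
      as [(k' & L & H)|Hn]; [exists (k', L); auto|exists (0, []); tauto]. }
  apply choice in Hc as [c Hc].
  set (tb := tube q (fun j => fst (c j)) (fun j => snd (c j))).
  set (roots := map q (seq 0 (S J))).
  assert (Hroot : forall k, k <= J -> In (q k) roots) by (intros k Hk; apply in_map, in_seq; lia).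
  assert (Htb : forall k, tb (q k)) by (intros k; left; exists k; reflexivity).
  assert (Hreach : forall n k, k <= n ->
    exists x, In x roots /\ exists lw, walk (Digraph tb (edge GT)) x lw (q k)).
  { induction n as [|n IH]; intros k Hk.
    - exists (q k); split; [apply Hroot; lia|exists []; apply walk_nil, Htb].
    - destruct (Nat.le_gt_cases k J) as [HkJ|HkJ];
        [exists (q k); split; [apply Hroot, HkJ|exists []; apply walk_nil, Htb]|].
      destruct k as [|k]; [lia|]; destruct (HJ k ltac:(lia)) as [(a & Ha & Ea)|Hs].
      + destruct (IH k ltac:(lia)) as (x & Hx & lw & Hw); exists x; split; auto.
        exists (lw ++ [q (S k)]); apply (walk_snoc Hw); [|apply Htb].
        rewrite Ea; exact (GT_edge (HqT k) Ha).
      + destruct (Hc _ Hs) as (Hlt & Hlink).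
        destruct (IH (fst (c (S k))) ltac:(lia)) as (x & Hx & lw & Hw); exists x; split; auto.
        exists (lw ++ word_walk (q (fst (c (S k)))) (snd (c (S k)))).
        exact (walk_app Hw (tube_word_walk q HqT _ _ Hlink)). }
  destruct (konig (edge GT) tb (fun v => map (op v) Al) roots) as (r & HrN & Hri & Hre).
  - intros v w _ _ (_ & a & Ha & ->); apply in_map, Al_spec, Ha.
  - intros l; destruct (injective_list_bound (ray_or_antiray_injective (or_introl Hq)) l) as [B HB].
    destruct (Hreach B B (le_n B)) as (x & Hx & lw & Hw).
    exists (q B); split; [intros H; apply HB in H; lia|eauto].
  - exists r; split.
    + left; split; [intros n; exact (tube_T q HqT _ _ (HrN n))|split; [exact Hri|exact Hre]].
    + exact (tube_equiv q (ray_or_antiray_injective (or_introl Hq)) HqT _ _ Hri HrN).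
Qed.

Lemma antiray_step_source {q} : is_antiray GTs q -> exists J, forall k, J <= k ->
  (exists a, A a /\ q k = op (q (S k)) a) \/
  exists k' L, k < k' /\ In L WL /\ q k = fold_left op L (q k').
Proof.
  intros Hq; pose proof (ray_or_antiray_injective (or_intror Hq)) as Hqi.
  destruct (disjoint_family_avoid (injective_disjoint Hqi) (stuck_card q)) as [J HJ].
  exists J; intros k Hk; destruct (proj2 (proj2 Hq) k) as (_ & g & [Ha| ->] & Eg); [left; eauto|right].
  destruct (trace_s (q (S k))) as [(L & HL & Ht)|Ho]; [exists (S k), L; rewrite Eg; auto|].
  rewrite <- Eg in Ho.
  destruct (classic (exists k' L, S k <= k' /\ In L WL /\ q k = fold_left op L (q k')))
    as [(k' & L & Hk' & HL & Ht)|Hn]; [exists k', L; auto|].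
  exfalso; apply (HJ k Hk (q k) (or_introl eq_refl)); right; right; exists (S k); intros M HM.
  destruct (trace_bwd (GTs_antiray_bwd_steps Hq) (M - S k) Ho) as [(k' & Hk' & L & HL & Ht)|H'].
  - exfalso; apply Hn; exists k', L; auto.
  - replace (S k + (M - S k)) with M in H' by lia; exact H'.
Qed.

Lemma GTs_antiray_equiv {q} : is_antiray GTs q -> (forall k, T (q k)) ->
  exists r, ray_or_antiray GT r /\ end_equiv GTs r q.
Proof.
  intros Hq HqT; pose proof (ray_or_antiray_injective (or_intror Hq)) as Hqi.
  destruct (antiray_step_source Hq) as [J HJ].
  assert (Hc : forall j, exists p : nat * list V,
    (exists k' L, j < k' /\ In L WL /\ q j = fold_left op L (q k')) ->
    j < fst p /\ In (snd p) WL /\ q j = fold_left op (snd p) (q (fst p))).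
  { intros j; destruct (classic (exists k' L, j < k' /\ In L WL /\ q j = fold_left op L (q k')))
      as [(k' & L & H)|Hn]; [exists (k', L); auto|exists (0, []); tauto]. }
  apply choice in Hc as [c Hc].
  set (src := fun j => fst (c j)); set (wd := fun j => snd (c j)).
  set (tb := tube q src wd); set (E := fun x y => tube_step q src wd J y x).
  assert (Htb : forall k, tb (q k)) by (intros k; left; exists k; reflexivity).
  assert (Hreach : forall B, exists k, B <= k /\ J <= k /\ exists lw, walk (Digraph tb E) (q J) lw (q k)).
  { induction B as [|B (k & HBk & HJk & lw & Hw)];
      [exists J; repeat split; [lia|lia|exists []; apply walk_nil, Htb]|].
    destruct (Nat.le_gt_cases (S B) k) as [H|H]; [exists k; eauto|].
    destruct (HJ k HJk) as [(a & Ha & Ea)|Hs].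
    - exists (S k); repeat split; [lia|lia|]; exists (lw ++ [q (S k)]); apply (walk_snoc Hw); [|apply Htb].
      split; [rewrite Ea; exact (GT_edge (HqT (S k)) Ha)|left; exists k; auto].
    - destruct (Hc _ Hs) as (Hlt & Hlink).
      destruct (tube_word_walk_back q HqT src wd J Hlink) as [lw' Hw'].
      exists (src k); repeat split; [unfold src; lia|unfold src; lia|].
      exists (lw ++ lw'); exact (walk_app Hw Hw'). }
  pose proof (tube_step_pred_finite q Hqi src wd J) as Hpred; apply choice in Hpred as [nb Hnb].
  destruct (konig E tb nb [q J]) as (r & HrN & Hri & Hre).
  - intros v w _ _ H; exact (Hnb v w H).
  - intros l; destruct (injective_list_bound Hqi l) as [B HB].
    destruct (Hreach B) as (k & Hk & _ & lw & Hw).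
    exists (q k); split; [intros H; apply HB in H; lia|exists (q J); split; [now left|eauto]].
  - exists r; split.
    + right; split; [intros n; exact (tube_T q HqT _ _ (HrN n))|split; [exact Hri|]].
      intros n; exact (proj1 (Hre n)).
    + exact (tube_equiv q Hqi HqT _ _ Hri HrN).
Qed.

Lemma GTs_ray_or_antiray_equiv {q} : ray_or_antiray GTs q ->
  exists r, ray_or_antiray GT r /\ end_equiv GTs r q.
Proof.
  intros Hq; destruct (injective_list_bound (ray_or_antiray_injective Hq) Fl) as [K HK].
  destruct (ray_or_antiray_shift K Hq) as [Hq' Eq'].
  assert (HqT : forall k, T (q (k + K))).
  { intros k; apply NNPP; intros Ht; enough (k + K < K) by lia.
    apply HK, Fl_spec; split; [exact (ray_or_antiray_vert Hq _)|exact Ht]. }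
  destruct Hq' as [Hr|Ha]; [destruct (GTs_ray_equiv Hr HqT) as (r & Hr1 & Hr2)
                           |destruct (GTs_antiray_equiv Ha HqT) as (r & Hr1 & Hr2)];
    exists r; split; auto; [exact (end_equiv_trans (or_introl Hr) Hr2 Eq')
                          |exact (end_equiv_trans (or_intror Ha) Hr2 Eq')].
Qed.

Lemma cayley_ends_iso_of_words : ends_iso GT GTs.
Proof.
  apply (subgraph_ends_iso GT_GTs_vert GT_GTs_edge).
  - intros r r' Hr _; exact (reach_le_back_cayley Hr).
  - intros q Hq; exact (GTs_ray_or_antiray_equiv Hq).
Qed.

End Shadows.

Theorem cayley_ends_iso : ends_iso GT GTs.
Proof.
  destruct short_words as (WL & WL_A & WL_short).
  exact (cayley_ends_iso_of_words WL WL_A WL_short).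
Qed.

End CayleyGraphs.

Theorem mainTheorem5 (S : Type) (op : S -> S -> S)
  (op_assoc : forall x y z, op x (op y z) = op (op x y) z)
  (A : S -> Prop) (A_fin : finite_set A) (s : S) :
  let T := gen op A in
  let Ts := gen op (fun x => T x \/ x = s) in
  finite_set (fun x => Ts x /\ ~ T x) ->
  ends_iso (cayley_r op T A) (cayley_r op Ts (fun x => A x \/ x = s)).
Proof.
  intros T Ts [Fl Fl_spec]; destruct A_fin as [Al Al_spec].
  exact (cayley_ends_iso op op_assoc A Al s Fl Al_spec Fl_spec).
Qed.
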